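(* Let $C=L_1;\ldots;L_d$ be a sorting network on $n$ channels of depth $d\ge2$ whose last layer is in last layer normal form. Let $i<j$ be two channels that are both unused in layer $L_{d-1}$ and that belong to different blocks of $C$. Then the network obtained from $C$ by adding the comparator $(i,j)$ to layer $L_{d-1}$ is still a sorting network.
   Context: Channels are numbered $1,\ldots,n$. A comparator network of depth $d$ is a sequence $C=L_1;\ldots;L_d$ of layers; each layer is a set of comparators $(i,j)$ with $1\le i<j\le n$, each channel occurring in at most one comparator of a layer. An input $\bar x\in\{0,1\}^n$ propagates: $\bar x_0=\bar x$, and $\bar x_k$ is obtained from $\bar x_{k-1}$ by, for each $(i,j)\in L_k$, putting the minimum of the values at positions $i,j$ at position $i$ and the maximum at position $j$. The output is $C(\bar x)=\bar x_d$; $C$ is a sorting network if $C(\bar x)$ is sorted non-decreasingly for all $\bar x\in\{0,1\}^n$. A channel is used in a layer if it occurs in some comparator of that layer. The last layer $L_d$ is in last layer normal form if every comparator of $L_d$ is of the form $(i,i+1)$ and there is no $i<n$ with both $i$ and $i+1$ unused in $L_d$. The blocks of $C$ are the vertex sets of the connected components of the graph on $\{1,\ldots,n\}$ with an edge $\{i,j\}$ for each comparator $(i,j)\in L_d$. *)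

(* Channels are 'I_n (0-based: channel k here is channel k+1 of the paper). *)
From mathcomp Require Import all_boot.
Set Implicit Arguments. Unset Strict Implicit. Unset Printing Implicit Defensive.

(* A comparator (i,j) on n channels; validity i < j is imposed by valid_layer. *)
Definition comparator (n : nat) := ('I_n * 'I_n)%type.
Definition layer (n : nat) := seq (comparator n).
Definition network (n : nat) := seq (layer n).

Definition channels n (L : layer n) : seq 'I_n :=
  flatten [seq [:: c.1; c.2] | c <- L].

Definition valid_layer n (L : layer n) : bool :=
  all (fun c : comparator n => (c.1 < c.2)%N) L && uniq (channels L).

Definition valid_network n (C : network n) : bool := all (@valid_layer n) C.

(* Applying a comparator (i,j): min (= &&) goes to i, max (= ||) goes to j. *)
Definition apply_comp n (c : comparator n) (x : 'I_n -> bool) : 'I_n -> bool :=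
  fun k => if k == c.1 then x c.1 && x c.2
           else if k == c.2 then x c.1 || x c.2 else x k.

(* Since the comparators of a valid layer are disjoint, applying them one
   after the other is the same as applying them simultaneously. *)
Definition apply_layer n (L : layer n) (x : 'I_n -> bool) : 'I_n -> bool :=
  foldl (fun y c => apply_comp c y) x L.

Definition run n (C : network n) (x : 'I_n -> bool) : 'I_n -> bool :=
  foldl (fun y L => apply_layer L y) x C.

Definition sorted_out n (y : 'I_n -> bool) : Prop :=
  forall i j : 'I_n, (i <= j)%N -> (y i <= y j)%N.

Definition sorting_network n (C : network n) : Prop :=
  forall x : 'I_n -> bool, sorted_out (run C x).

Definition used n (L : layer n) (k : 'I_n) : bool := k \in channels L.

Definition llnf n (L : layer n) : bool :=
  all (fun c : comparator n => val c.2 == (val c.1).+1) L &&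
  [forall i : 'I_n, forall j : 'I_n,
     (val j == (val i).+1) ==> (used L i || used L j)].

(* edge relation of the graph of the last layer; blocks = connected components *)
Definition block_rel n (L : layer n) : rel 'I_n :=
  fun a b => ((a, b) \in L) || ((b, a) \in L).

Definition same_block n (L : layer n) (i j : 'I_n) : bool :=
  connect (block_rel L) i j.

(* Since channels i and j are unused in L_{d-1}, the new comparator (i,j) commutes
   with L_{d-1}, so it acts on the values y leaving L_{d-1}; it changes nothing
   unless y i = 1 and y j = 0. In that case the last layer can move the 1 on
   channel i at most to its partner i+1, and the 0 on channel j at most to its
   partner j-1. As i and j lie in different blocks, these two positions are still
   in order, so the output of C would be unsorted. *)
From Stdlib Require Import FunctionalExtensionality.
From mathcomp Require Import all_boot.
Set Implicit Arguments. Unset Strict Implicit. Unset Printing Implicit Defensive.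

Section Layers.

Variable n : nat.
Implicit Types (L M : layer n) (c d : comparator n) (y z : 'I_n -> bool) (i j k p q : 'I_n).

Lemma channels_cons d L : channels (d :: L) = d.1 :: d.2 :: channels L.
Proof. by []. Qed.

Lemma apply_layer_cons d L y : apply_layer (d :: L) y = apply_layer L (apply_comp d y).
Proof. by []. Qed.

Lemma apply_layer_notin L y k : k \notin channels L -> apply_layer L y k = y k.
Proof.
elim: L y => [//|d L IH] y; rewrite channels_cons !inE negb_or => /andP[kd1 /norP[kd2 kL]].
by rewrite apply_layer_cons IH // /apply_comp (negbTE kd1) (negbTE kd2).
Qed.

Lemma mem_channels L c : c \in L -> (c.1 \in channels L) && (c.2 \in channels L).
Proof.
elim: L => [//|d L IH]; rewrite inE channels_cons => /orP[/eqP->|/IH/andP[c1 c2]].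
  by rewrite !inE !eqxx orbT.
by rewrite !inE c1 c2 !orbT.
Qed.

Lemma channelsP L k : k \in channels L -> exists2 c, c \in L & (k == c.1) || (k == c.2).
Proof.
elim: L => [//|d L IH]; rewrite channels_cons !inE => /orP[kd|/orP[kd|/IH[c cL kc]]].
- by exists d; rewrite ?inE ?eqxx ?kd.
- by exists d; rewrite ?inE ?eqxx ?kd ?orbT.
- by exists c; rewrite ?inE ?cL ?orbT.
Qed.

Lemma apply_layer_mem L y c : uniq (channels L) -> c \in L ->
  apply_layer L y c.1 = y c.1 && y c.2 /\ apply_layer L y c.2 = y c.1 || y c.2.
Proof.
elim: L y => [//|d L IH] y; rewrite apply_layer_cons channels_cons /= !inE negb_or.
move=> /andP[/andP[d12 d1L] /andP[d2L uL]] /orP[/eqP->|cL].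
  have d21 : (d.2 == d.1) = false by rewrite eq_sym (negbTE d12).
  by rewrite !apply_layer_notin // /apply_comp eqxx d21 eqxx.
have [-> ->] := IH (apply_comp d y) uL cL.
have /andP[c1 c2] := mem_channels cL.
have cd k : k \in channels L -> (k == d.1) = false /\ (k == d.2) = false.
  by move=> kL; split; apply/eqP=> kd; [move: d1L | move: d2L]; rewrite -kd kL.
by rewrite /apply_comp; have [-> ->] := cd _ c1; have [-> ->] := cd _ c2.
Qed.

Lemma apply_compC c d y :
  c.1 != d.1 -> c.1 != d.2 -> c.2 != d.1 -> c.2 != d.2 ->
  apply_comp c (apply_comp d y) = apply_comp d (apply_comp c y).
Proof.
move=> /negbTE c1d1 /negbTE c1d2 /negbTE c2d1 /negbTE c2d2.
apply: functional_extensionality => k; rewrite /apply_comp c1d1 c1d2 c2d1 c2d2.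
rewrite ![d.1 == _]eq_sym ![d.2 == _]eq_sym c1d1 c1d2 c2d1 c2d2.
case: (k =P c.1) => [->|_]; first by rewrite c1d1 c1d2.
by case: (k =P c.2) => [->|_]; rewrite ?c2d1 ?c2d2.
Qed.

Lemma apply_layer_compC M c z :
  c.1 \notin channels M -> c.2 \notin channels M ->
  apply_layer M (apply_comp c z) = apply_comp c (apply_layer M z).
Proof.
elim: M z => [//|d M IH] z; rewrite channels_cons !inE !negb_or.
move=> /and3P[c1d1 c1d2 c1M] /and3P[c2d1 c2d2 c2M].
by rewrite !apply_layer_cons -apply_compC // IH.
Qed.

Lemma apply_comp_id c y : y c.1 ==> y c.2 -> apply_comp c y = y.
Proof.
move=> y12; apply: functional_extensionality => k; rewrite /apply_comp.
case: (k =P c.1) => [->|_]; first by case: (y c.1) y12 => //= ->.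
case: (k =P c.2) => [->|_] //; by case: (y c.1) y12 => //= ->.
Qed.

Lemma apply_layer_cons_id M c z :
  c.1 \notin channels M -> c.2 \notin channels M ->
  apply_layer M z c.1 ==> apply_layer M z c.2 ->
  apply_layer (c :: M) z = apply_layer M z.
Proof. by move=> c1M c2M y12; rewrite apply_layer_cons apply_layer_compC // apply_comp_id. Qed.

Lemma apply_layer_up L y i : uniq (channels L) ->
  exists2 p, y i ==> apply_layer L y p & (p == i) || ((i, p) \in L).
Proof.
move=> uL; case: (boolP (i \in channels L)) => iL; last first.
  by exists i; rewrite ?eqxx // apply_layer_notin // implybb.
have [[c1 c2] cL /= /orP[/eqP ic|/eqP ic]] := channelsP iL; subst i.
- exists c2; last by rewrite cL orbT.
  by have [_ ->] := apply_layer_mem y uL cL; apply/implyP => /= ->.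
- exists c2; rewrite ?eqxx //.
  by have [_ ->] := apply_layer_mem y uL cL; apply/implyP => /= ->; rewrite orbT.
Qed.

Lemma apply_layer_down L y j : uniq (channels L) ->
  exists2 q, apply_layer L y q ==> y j & (q == j) || ((q, j) \in L).
Proof.
move=> uL; case: (boolP (j \in channels L)) => jL; last first.
  by exists j; rewrite ?eqxx // apply_layer_notin // implybb.
have [[c1 c2] cL /= /orP[/eqP jc|/eqP jc]] := channelsP jL; subst j.
- exists c1; rewrite ?eqxx //.
  by have [-> _] := apply_layer_mem y uL cL; apply/implyP => /andP[].
- exists c1; last by rewrite cL orbT.
  by have [-> _] := apply_layer_mem y uL cL; apply/implyP => /andP[].
Qed.

Definition adjacent_layer L := all (fun c : comparator n => val c.2 == (val c.1).+1) L.

Lemma adjacent_block_le L i j p q : adjacent_layer L ->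
  (i < j)%N -> ~~ same_block L i j ->
  (p == i) || ((i, p) \in L) -> (q == j) || ((q, j) \in L) -> (p <= q)%N.
Proof.
move=> /allP adjL ij ijL /orP[/eqP->|ipL] /orP[/eqP->|qjL].
- exact: ltnW.
- by move/eqP: (adjL _ qjL) => /= jq; rewrite -ltnS -jq.
- by move/eqP: (adjL _ ipL) => /= ->.
- move/eqP: (adjL _ ipL) => /= pi; move/eqP: (adjL _ qjL) => /= jq.
  rewrite pi -ltnS -jq ltn_neqAle ij andbT; apply/eqP => ij1.
  have pj : p = j by apply: val_inj; rewrite /= pi ij1.
  by move: ijL; rewrite /same_block -pj connect1 // /block_rel ipL.
Qed.

Lemma sorted_adjacent_layer_le L y i j : valid_layer L -> adjacent_layer L ->
  (i < j)%N -> ~~ same_block L i j -> sorted_out (apply_layer L y) ->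
  y i ==> y j.
Proof.
move=> /andP[_ uL] adjL ij ijL sortL.
have [p yi_p ip] := apply_layer_up y i uL.
have [q q_yj qj] := apply_layer_down y j uL.
have := sortL p q (adjacent_block_le adjL ij ijL ip qj).
by move: yi_p q_yj; case: (y i); case: (y j); case: (apply_layer L y p); case: (apply_layer L y q).
Qed.

End Layers.

Lemma network_split n (C : network n) : (2 <= size C)%N ->
  exists P M L, C = P ++ [:: M; L].
Proof.
case/lastP: C => [//|C L]; case/lastP: C => [//|P M] _.
by exists P, M, L; rewrite -!cats1 -catA.
Qed.

Lemma run_cat2 n (P : network n) M L x :
  run (P ++ [:: M; L]) x = apply_layer L (apply_layer M (run P x)).
Proof. by rewrite /run foldl_cat. Qed.

Lemma set_nth_cat T (x0 : T) P s y : set_nth x0 (P ++ s) (size P) y = P ++ set_nth x0 s 0 y.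
Proof. by elim: P => [|a P IH] //=; rewrite IH. Qed.

Theorem lemma7 (n : nat) (C : network n) (i j : 'I_n) :
  valid_network C ->
  (2 <= size C)%N ->
  sorting_network C ->
  llnf (last [::] C) ->
  (i < j)%N ->
  ~~ used (nth [::] C (size C - 2)) i ->
  ~~ used (nth [::] C (size C - 2)) j ->
  ~~ same_block (last [::] C) i j ->
  sorting_network
    (set_nth [::] C (size C - 2) ((i, j) :: nth [::] C (size C - 2))).
Proof.
move=> vC s2C sortC; have [P [M [L defC]]] := network_split s2C; subst C.
have -> : (size (P ++ [:: M; L]) - 2 = size P)%N by rewrite size_cat addnK.
rewrite nth_cat ltnn subnn last_cat set_nth_cat /=.
move: vC; rewrite /valid_network all_cat /= => /and3P[_ _ /andP[vL _]].
move=> /andP[adjL _] ij iM jM ijL x.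
have sortL := sortC x; rewrite run_cat2 in sortL.
rewrite run_cat2 apply_layer_cons_id //.
exact: sorted_adjacent_layer_le vL adjL ij ijL sortL.
Qed.
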